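(* Let $G$ be a totally disconnected locally compact group such that every proper commensurated open subgroup of $G$ is compact. Then every continuous homomorphism $\varphi:G\to H$, where $H$ is a totally disconnected locally compact group, has closed image.
   Context: A subgroup $U\leq G$ is commensurated if $gUg^{-1}\cap U$ has finite index in both $U$ and $gUg^{-1}$ for every $g\in G$. *)

From HB Require Import structures.
From mathcomp Require Import all_boot all_order all_algebra.
From mathcomp Require Import all_classical all_reals all_analysis.
Set Implicit Arguments. Unset Strict Implicit. Unset Printing Implicit Defensive.
Local Open Scope classical_set_scope.

Record topGroup := TopGroup {
  tg_carrier :> topologicalType;
  tg_mul : tg_carrier -> tg_carrier -> tg_carrier;
  tg_inv : tg_carrier -> tg_carrier;
  tg_one : tg_carrier;
  tg_mulA : forall x y z, tg_mul x (tg_mul y z) = tg_mul (tg_mul x y) z;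
  tg_mul1g : forall x, tg_mul tg_one x = x;
  tg_mulVg : forall x, tg_mul (tg_inv x) x = tg_one;
  tg_mul_cont : continuous (fun p : tg_carrier * tg_carrier => tg_mul p.1 p.2);
  tg_inv_cont : continuous tg_inv
}.

Definition tdlc (G : topGroup) : Prop :=
  totally_disconnected [set: G] /\ locally_compact [set: G].

Definition is_subgroup (G : topGroup) (U : set G) : Prop :=
  [/\ U (tg_one G),
      (forall x y, U x -> U y -> U (tg_mul x y)) &
      (forall x, U x -> U (tg_inv x))].

Definition lcoset (G : topGroup) (x : G) (V : set G) : set G :=
  [set y | exists2 v, V v & y = tg_mul x v].

Definition finite_index (G : topGroup) (V U : set G) : Prop :=
  finite_set [set lcoset x V | x in U].

Definition conjset (G : topGroup) (g : G) (U : set G) : set G :=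
  [set y | exists2 u, U u & y = tg_mul (tg_mul g u) (tg_inv g)].

Definition commensurated (G : topGroup) (U : set G) : Prop :=
  forall g : G,
    finite_index (conjset g U `&` U) U /\
    finite_index (conjset g U `&` U) (conjset g U).

Definition group_hom (G H : topGroup) (f : G -> H) : Prop :=
  forall x y, f (tg_mul x y) = tg_mul (f x) (f y).

(* If some compact open subgroup V of H does not contain phi(G), then
   U = phi^-1(V) is a proper open subgroup of G.  It is commensurated, since a
   compact set meets only finitely many cosets of an open subgroup and the
   conjugates of V are again compact open subgroups; so U is compact.  Then
   range phi `&` V = phi(U) is compact, hence closed, and a subgroup whose trace
   on an open subgroup is closed is itself closed.  Otherwise phi(G) lies in
   every compact open subgroup of H, and these intersect in the identity by van
   Dantzig's theorem.  Van Dantzig's theorem is proved in two steps: the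
   quasi-component of a point in a compact neighbourhood is connected, hence a
   singleton, which yields a base of compact open neighbourhoods; and the right
   stabiliser of a compact open neighbourhood of the identity is a compact open
   subgroup inside it. *)

From HB Require Import structures.
From mathcomp Require Import all_boot all_order all_algebra.
From mathcomp Require Import all_classical all_reals all_analysis.
Local Open Scope classical_set_scope.

Local Infix "•" := (@tg_mul _) (at level 40, left associativity).
Local Notation inv := (@tg_inv _).
Local Notation one := (@tg_one _).

Section GroupLaws.
Context {G : topGroup}.
Implicit Types x y z : G.

Lemma tg_mulgV x : x • inv x = one.
Proof.
rewrite -[LHS](tg_mul1g (x • inv x)) -{1}(tg_mulVg (inv x)).
by rewrite -tg_mulA [inv x • (x • inv x)]tg_mulA tg_mulVg tg_mul1g tg_mulVg.
Qed.

Lemma tg_mulg1 x : x • one = x.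
Proof. by rewrite -(tg_mulVg x) tg_mulA tg_mulgV tg_mul1g. Qed.

Lemma tg_mulKg x y : inv x • (x • y) = y.
Proof. by rewrite tg_mulA tg_mulVg tg_mul1g. Qed.

Lemma tg_mulKVg x y : x • (inv x • y) = y.
Proof. by rewrite tg_mulA tg_mulgV tg_mul1g. Qed.

Lemma tg_mulgK x y : x • y • inv y = x.
Proof. by rewrite -tg_mulA tg_mulgV tg_mulg1. Qed.

Lemma tg_mulgKV x y : x • inv y • y = x.
Proof. by rewrite -tg_mulA tg_mulVg tg_mulg1. Qed.

Lemma tg_mulgI x : injective (tg_mul x).
Proof. by move=> y z e; rewrite -(tg_mulKg x y) e tg_mulKg. Qed.

Lemma tg_eq_invg x y : x • y = one -> x = inv y.
Proof. by move=> e; rewrite -(tg_mulgK x y) e tg_mul1g. Qed.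

Lemma tg_invgK x : inv (inv x) = x.
Proof. by apply/esym/tg_eq_invg; rewrite tg_mulgV. Qed.

Lemma tg_invgM x y : inv (x • y) = inv y • inv x.
Proof. by apply/esym/tg_eq_invg; rewrite -tg_mulA tg_mulKg tg_mulVg. Qed.

Lemma tg_invg1 : inv (one : G) = one.
Proof. by apply/esym/tg_eq_invg; rewrite tg_mul1g. Qed.

Lemma lcosetE x (V : set G) : lcoset x V = [set y | V (inv x • y)].
Proof.
apply/seteqP; split => y; first by move=> [v Vv ->] /=; rewrite tg_mulKg.
by move=> /= Vy; exists (inv x • y) => //; rewrite tg_mulKVg.
Qed.

Lemma conjsetE x (V : set G) : conjset x V = [set y | V (inv x • y • x)].
Proof.
apply/seteqP; split => y.
  by move=> [v Vv ->] /=; rewrite !tg_mulA tg_mulgKV tg_mulVg tg_mul1g.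
move=> /= Vy; exists (inv x • y • x) => //.
by rewrite !tg_mulA tg_mulgK tg_mulgV tg_mul1g.
Qed.

Lemma subgroupI {U V : set G} :
  is_subgroup U -> is_subgroup V -> is_subgroup (U `&` V).
Proof.
move=> [U1 UM UV] [V1 VM VV]; split => //.
  by move=> x y [? ?] [? ?]; split; [apply: UM|apply: VM].
by move=> x [? ?]; split; [apply: UV|apply: VV].
Qed.

Lemma conj_subgroup x {V : set G} : is_subgroup V -> is_subgroup (conjset x V).
Proof.
move=> [V1 VM VV]; rewrite conjsetE; split => /=.
- by rewrite tg_mulg1 tg_mulVg.
- by move=> y z Vy Vz; have := VM _ _ Vy Vz; rewrite /= !tg_mulA tg_mulgK.
- by move=> y Vy; have := VV _ Vy; rewrite /= !tg_invgM tg_invgK tg_mulA.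
Qed.

End GroupLaws.

Section Homomorphisms.
Context {G H : topGroup} {phi : G -> H}.
Hypothesis hom_phi : group_hom phi.

Lemma group_hom1 : phi one = one.
Proof. by apply: (@tg_mulgI _ (phi one)); rewrite -hom_phi !tg_mulg1. Qed.

Lemma group_homV x : phi (inv x) = inv (phi x).
Proof. by apply: tg_eq_invg; rewrite -hom_phi tg_mulVg group_hom1. Qed.

Lemma preimage_subgroup (V : set H) : is_subgroup V -> is_subgroup (phi @^-1` V).
Proof.
move=> [V1 VM VV]; split; rewrite /preimage /=.
- by rewrite group_hom1.
- by move=> x y Vx Vy; rewrite hom_phi; apply: VM.
- by move=> x Vx; rewrite group_homV; apply: VV.
Qed.

Lemma range_subgroup : is_subgroup (range phi).
Proof.
split; first by exists one => //; rewrite group_hom1.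
  by move=> _ _ [x _ <-] [y _ <-]; exists (x • y) => //; rewrite hom_phi.
by move=> _ [x _ <-]; exists (inv x) => //; rewrite group_homV.
Qed.

Lemma preimage_conjset x (V : set H) :
  phi @^-1` conjset (phi x) V = conjset x (phi @^-1` V).
Proof.
by rewrite !conjsetE; apply/seteqP; split => y /=; rewrite !hom_phi group_homV.
Qed.

Lemma preimage_lcoset {W : set H} {u x} : is_subgroup W ->
  lcoset x W (phi u) -> lcoset u (phi @^-1` W) = phi @^-1` (lcoset x W).
Proof.
move=> [W1 WM WV]; rewrite !lcosetE /= => Wxu.
apply/seteqP; split => y /=; rewrite hom_phi group_homV => Wy.
  by rewrite -(tg_mulKVg (phi u) (phi y)) tg_mulA; apply: WM.
have := WM _ _ (WV _ Wxu) Wy.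
by rewrite tg_invgM tg_invgK -tg_mulA tg_mulKVg.
Qed.

End Homomorphisms.

Section Continuity.
Context {G : topGroup}.
Implicit Types x y : G.

Lemma tg_cvgM (T : Type) (F : set_system T) (FF : Filter F) (f g : T -> G) x y :
  f @ F --> x -> g @ F --> y -> (fun t => f t • g t) @ F --> x • y.
Proof. by move=> fx gy; apply: continuous2_cvg => //; exact: (@tg_mul_cont G (x, y)). Qed.

Lemma tg_cvgV (T : Type) (F : set_system T) (FF : Filter F) (f : T -> G) x :
  f @ F --> x -> (fun t => inv (f t)) @ F --> inv x.
Proof. by move=> fx; apply: (cvg_comp _ _ fx); exact: tg_inv_cont. Qed.

Lemma continuous_conjg x y : continuous (fun z : G => x • z • y).
Proof.
move=> z; apply: tg_cvgM; last exact: cvg_cst.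
by apply: tg_cvgM; [exact: cvg_cst|exact: cvg_id].
Qed.

Lemma continuous_lmul x : continuous (fun z : G => x • z).
Proof. by move=> z; apply: tg_cvgM; [exact: cvg_cst|exact: cvg_id]. Qed.

Lemma nbhs_lmul {x y} {O : set G} : nbhs (x • y) O -> nbhs y [set z | O (x • z)].
Proof. exact: continuous_lmul. Qed.

Lemma nbhs_lcoset x {O : set G} : nbhs one O -> nbhs x (lcoset x O).
Proof. by rewrite lcosetE => O1; apply: nbhs_lmul; rewrite tg_mulVg. Qed.

Lemma open_lcoset x {O : set G} : open O -> open (lcoset x O).
Proof. by rewrite lcosetE => oO; exact: (continuousP _).1 (continuous_lmul _) _ oO. Qed.

Lemma open_conjset x {O : set G} : open O -> open (conjset x O).
Proof.
by rewrite conjsetE => oO; exact: (continuousP _).1 (continuous_conjg _ _) _ oO.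
Qed.

Lemma compact_conjset x {K : set G} : compact K -> compact (conjset x K).
Proof.
move=> cK; have -> : conjset x K = (fun z => x • z • inv x) @` K.
  by apply/seteqP; split => y [z Kz e]; exists z.
by apply: continuous_compact => //; apply/continuous_subspaceT/continuous_conjg.
Qed.

End Continuity.

Lemma totally_disconnected_closed1 {T : topologicalType} :
  totally_disconnected [set: T] -> forall x : T, closed [set x].
Proof. by move=> td x; rewrite -(td x I); exact/component_closed/closedT. Qed.

Lemma tg_hausdorff {G : topGroup} : closed [set one : G] -> hausdorff_space G.
Proof.
move=> cl1 p q clpq; apply: contrapT => npq.
have cvg_div : (fun t : G * G => inv t.1 • t.2) @ (p, q) --> inv p • q.
  by apply: tg_cvgM; [apply: tg_cvgV; exact: cvg_fst|exact: cvg_snd].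
have : nbhs (inv p • q) (~` [set one]).
  apply: open_nbhs_nbhs; split; first exact: closed_openC.
  by move=> /= pq1; apply: npq; rewrite -(tg_mulKVg p q) pq1 tg_mulg1.
move=> /cvg_div [[A B]] /= [pA qB] AB.
have [c [Ac Bc]] := clpq _ _ pA qB.
by apply: (AB (c, c)) => //=; exact: tg_mulVg.
Qed.

Section QuasiComponent.
Context {T : topologicalType}.
Implicit Types (K D O P R U : set T) (p : T).

(* For closed [K], these are exactly the clopen subsets of the subspace [K]. *)
Definition clopen_in K D := [/\ D `<=` K, closed D & exists2 W, open W & D = K `&` W].

Definition quasi_component K p := \bigcap_(D in [set D | clopen_in K D /\ D p]) D.

Lemma clopen_in_refl K : closed K -> clopen_in K K.
Proof. by move=> clK; split => //; exists setT; [exact: openT|rewrite setIT]. Qed.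

Lemma clopen_inI {K D1 D2} : clopen_in K D1 -> clopen_in K D2 -> clopen_in K (D1 `&` D2).
Proof.
move=> [D1K clD1 [W1 oW1 eD1]] [_ clD2 [W2 oW2 eD2]]; split.
- by move=> x [/D1K].
- exact: closedI.
- by exists (W1 `&` W2); [exact: openI|rewrite eD1 eD2 setIACA setIid].
Qed.

Lemma clopen_in_trace {K D U} : clopen_in K D -> open U ->
  D `<=` U `|` ~` closure U -> clopen_in K (D `&` U).
Proof.
move=> [DK clD [W oW eD]] oU DU; split.
- by move=> x [/DK].
- have -> : D `&` U = D `&` closure U.
    apply/seteqP; split => x [Dx Ux]; split => //; first exact: subset_closure.
    by case: (DU x Dx).
  exact: (closedI clD (@closed_closure _ U)).
- by exists (W `&` U); [exact: openI|rewrite eD setIA].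
Qed.

Lemma quasi_component_refl K p : quasi_component K p p.
Proof. by move=> D []. Qed.

Lemma quasi_component_sub {K p} : closed K -> K p -> quasi_component K p `<=` K.
Proof. by move=> clK Kp x; apply; split => //; exact: clopen_in_refl. Qed.

Lemma closed_quasi_component {K} p : closed K -> closed (quasi_component K p).
Proof. by move=> clK; apply: closed_bigI => D [[]]. Qed.

Lemma quasi_component_cover K p O : compact K -> closed K -> K p -> open O ->
  quasi_component K p `<=` O -> exists2 D, clopen_in K D /\ D p & D `<=` O.
Proof.
move=> cK clK Kp oO QO; apply: contrapT => noD.
pose F := filter_from [set D | clopen_in K D /\ D p] (fun D => D `&` ~` O).
have FF : ProperFilter F.
  apply: filter_from_proper.
    apply: filter_from_filter; first by exists K; split => //; exact: clopen_in_refl.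
    move=> D1 D2 [cD1 D1p] [cD2 D2p]; exists (D1 `&` D2).
      by split; [exact: clopen_inI|split].
    by move=> x [[? ?] ?].
  move=> D cDp; apply: contrapT => /forallNP nDO; apply: noD; exists D => // x Dx.
  by apply: contrapT => nOx; apply: (nDO x).
have [|z [[Kz nOz] Fz]] := compact_closedI cK (open_closedC oO) FF.
  by exists K; [split => //; exact: clopen_in_refl|].
apply/nOz/QO => D [cD Dp]; have [_ clD _] := cD; apply: clD => B Bz.
have FD : F (D `&` ~` O) by exists D.
by have [y [[Dy _] By]] := Fz _ B FD Bz; exists y.
Qed.

(* The compact [K2] with [K] inside its interior is only there to make [K]
   normal, through [compact_normal_local]. *)
Section LocalQuasiComponent.
Context {K2 K : set T} {p : T}.
Hypotheses (hT : hausdorff_space T) (cK2 : compact K2) (cK : compact K)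
  (clK : closed K) (KK2 : K `<=` K2°) (Kp : K p).

Let Q := quasi_component K p.

Lemma quasi_component_split {P R} : closed P -> closed R ->
  Q = P `|` R -> P `&` R = set0 -> P p -> R = set0.
Proof.
move=> clP clR QPR PR0 Pp.
have PQ : P `<=` Q by rewrite QPR; exact: subsetUl.
have PK2 : P `<=` K2° by move=> x /PQ /(quasi_component_sub clK Kp) /KK2.
have nbhs_nR : set_nbhs P (~` R).
  apply/set_nbhsP; exists (~` R); split => //; first exact: closed_openC.
  by move=> x Px Rx; rewrite -[False]/(set0 x) -PR0.
have [C /set_nbhsP [U [oU PU UC]] clCR] :=
  compact_normal_local hT cK2 PK2 clP nbhs_nR.
have clUR : closure U `<=` ~` R := subset_trans (closureS UC) clCR.
have [D [cD Dp] DU] : exists2 D, clopen_in K D /\ D p & D `<=` U `|` ~` closure U.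
  apply: quasi_component_cover => //.
    by apply: openU => //; exact/closed_openC/closed_closure.
  by rewrite -/Q QPR => x [/PU|/clUR nUx]; [left|right => /nUx].
have QU : Q `<=` U.
  move=> x Qx; have [] // := Qx (D `&` U).
  by split; [exact: clopen_in_trace|split => //; exact: PU].
apply/seteqP; split => // x Rx; apply: (clUR x) => //; apply: subset_closure.
by apply: QU; rewrite QPR; right.
Qed.

Lemma connected_quasi_component : connected Q.
Proof.
move=> B [b Bb] [C1 oC1 eB1] [C2 clC2 eB2].
have clQ : closed Q := closed_quasi_component p clK.
have clB : closed B by rewrite eB2; exact: closedI.
pose R := Q `&` ~` C1.
have clR : closed R by apply: closedI => //; exact: open_closedC.
have QBR : Q = B `|` R.
  apply/seteqP; split => [x Qx|x [|[]//]]; last by rewrite eB1 => -[].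
  by case: (pselect (C1 x)) => C1x; [left; rewrite eB1|right].
have BR0 : B `&` R = set0.
  by apply/seteqP; split => // x []; rewrite eB1 => -[_ C1x] [].
case: (pselect (B p)) => Bp.
  have R0 := quasi_component_split clB clR QBR BR0 Bp.
  by apply/seteqP; split; [rewrite eB1 => x []|rewrite {1}QBR R0 setU0].
have Qp : Q p := quasi_component_refl K p.
have Rp : R p by split => // C1p; apply: Bp; rewrite eB1.
have := quasi_component_split clR clB _ _ Rp.
by rewrite setUC setIC => /(_ QBR BR0) B0; move: Bb; rewrite B0.
Qed.

Lemma quasi_component_set1 : totally_disconnected [set: T] -> Q = [set p].
Proof.
move=> td; apply/seteqP; split; last by move=> _ ->; exact: quasi_component_refl.
rewrite -(td p I).
exact: connected_component_max (quasi_component_refl K p) (subsetT _)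
  connected_quasi_component.
Qed.

End LocalQuasiComponent.
End QuasiComponent.

Lemma compact_open_nbhs_base {T : topologicalType} {p : T} {O : set T} :
  hausdorff_space T -> totally_disconnected [set: T] -> locally_compact [set: T] ->
  open O -> O p -> exists C, [/\ open C, compact C, C p & C `<=` O].
Proof.
move=> hT td lc oO Op.
have [K2 nK2 [cK2 _]] := lc p I; rewrite withinET in nK2.
have [C nC CK2] := compact_regular hT cK2 nK2 (nbhs_interior nK2).
pose K := closure C.
have clK : closed K := @closed_closure _ C.
have cK : compact K.
  exact: subclosed_compact clK cK2 (subset_trans CK2 (@interior_subset _ K2)).
have nK : nbhs p K by apply: filterS nC; exact: subset_closure.
have Kp : K p := nbhs_singleton nK.
have [D [[DK clD [W oW eD]] Dp] DO] : exists2 D, clopen_in K D /\ D p & D `<=` O `&` K°.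
  apply: quasi_component_cover => //; first exact: openI oO (@open_interior _ K).
  by rewrite (quasi_component_set1 hT cK2 cK clK CK2 Kp td) => _ ->; split.
exists D; split => //.
- have -> : D = K° `&` W.
    apply/seteqP; split => x; last by move=> [/interior_subset Kx Wx]; rewrite eD.
    by move=> Dx; split; [case: (DO x Dx)|move: Dx; rewrite eD => -[]].
  exact: openI (@open_interior _ K) oW.
- exact: subclosed_compact clD cK DK.
- by move=> x /DO [].
Qed.

Section OpenSubgroups.
Context {G : topGroup}.
Implicit Types (C V : set G).

Lemma open_subgroup_of_nbhs1 {V} : is_subgroup V -> nbhs one V -> open V.
Proof.
move=> [_ VM _] V1; rewrite openE => v Vv.
apply: filterS (nbhs_lcoset v V1) => _ [w Vw ->]; exact: VM.
Qed.

Lemma closed_open_subgroup {V} : is_subgroup V -> open V -> closed V.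
Proof.
move=> [V1 VM VV] oV; rewrite -[V]setCK; apply: open_closedC.
rewrite openE => y nVy; apply: filterS (nbhs_lcoset y (open_nbhs_nbhs (conj oV V1))).
move=> _ [v Vv ->] Vyv; apply: nVy.
by rewrite -(tg_mulgK y v); apply: VM => //; exact: VV.
Qed.

Definition rstab C := [set h | forall c, C c -> C (c • h) /\ C (c • inv h)].

Lemma rstab_subgroup C : is_subgroup (rstab C).
Proof.
split.
- by move=> c Cc; rewrite tg_invg1 tg_mulg1.
- move=> h k Sh Sk c Cc; rewrite tg_invgM !tg_mulA.
  by split; [apply: (Sk _ (Sh _ Cc).1).1|apply: (Sh _ (Sk _ Cc).2).2].
- by move=> h Sh c Cc; rewrite tg_invgK; have [] := Sh c Cc.
Qed.

Lemma rstab_sub {C} : C one -> rstab C `<=` C.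
Proof. by move=> C1 h /(_ _ C1) []; rewrite tg_mul1g. Qed.

(* Tube lemma: compactness of [C] gives one neighbourhood of [one] that works
   uniformly for all points of [C]. *)
Lemma nbhs1_rstab {C} : compact C -> open C -> nbhs one (rstab C).
Proof.
move=> cC oC.
have N : nbhs (one : G) [set h | forall c, C c -> C (c • h)].
  apply: ((compact_near_coveringP C).1 cC G (nbhs one) (fun h c => C (c • h))).
  move=> c Cc; have nC : nbhs (c • one) C by rewrite tg_mulg1; apply: open_nbhs_nbhs.
  exact: (@tg_mul_cont G (c, one) C nC).
have NV : nbhs (one : G) [set h | forall c, C c -> C (c • inv h)].
  have N' : nbhs (inv (one : G)) [set h | forall c, C c -> C (c • h)].
    by rewrite tg_invg1.
  exact: (@tg_inv_cont G one _ N').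
by apply: filterS (filterI N NV) => h [Nh NVh] c Cc; split; [apply: Nh|apply: NVh].
Qed.

Lemma compact_open_subgroup_sub {C} : compact C -> open C -> C one ->
  exists V, [/\ is_subgroup V, open V, compact V & V `<=` C].
Proof.
move=> cC oC C1; exists (rstab C).
have sV := rstab_subgroup C; have oV := open_subgroup_of_nbhs1 sV (nbhs1_rstab cC oC).
split => //; last exact: rstab_sub.
exact: subclosed_compact (closed_open_subgroup sV oV) cC (rstab_sub C1).
Qed.

Lemma van_dantzig {O : set G} : tdlc G -> open O -> O one ->
  exists V, [/\ is_subgroup V, open V, compact V & V `<=` O].
Proof.
move=> [td lc] oO O1.
have hG := tg_hausdorff (totally_disconnected_closed1 td one).
have [C [oC cC C1 CO]] := compact_open_nbhs_base hG td lc oO O1.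
have [V [sV oV cV VC]] := compact_open_subgroup_sub cC oC C1.
by exists V; split => //; exact: subset_trans VC CO.
Qed.

Lemma tdlc_compact_open_subgroups_bigcap (y : G) : tdlc G ->
  (forall V, is_subgroup V -> open V -> compact V -> V y) -> y = one.
Proof.
move=> tdG Vy; apply: contrapT => ny.
have oO : open (~` [set y]) := closed_openC (totally_disconnected_closed1 tdG.1 y).
have [V [sV oV cV VO]] := van_dantzig tdG oO (fun e => ny (esym e)).
exact: VO y (Vy V sV oV cV) erefl.
Qed.

Lemma closed_subgroup_of_closed_trace {S V : set G} : is_subgroup S ->
  is_subgroup V -> open V -> closed (S `&` V) -> closed S.
Proof.
move=> [_ SM SV] [V1 _ VV] oV clSV y clSy.
have [s [Ss]] := clSy _ (nbhs_lcoset y (open_nbhs_nbhs (conj oV V1))).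
rewrite lcosetE /= => /VV; rewrite tg_invgM tg_invgK => Vsy.
have SVsy : (S `&` V) (inv s • y).
  apply: clSV => B nB.
  have nBV : nbhs (inv s • y) (B `&` V).
    by apply: filterI nB _; exact: open_nbhs_nbhs.
  have [r [Sr [Br Vr]]] := clSy _ (nbhs_lmul nBV).
  by exists (inv s • r); split => //; split => //; apply: SM (SV _ Ss) Sr.
by rewrite -(tg_mulKVg s y); apply: SM Ss SVsy.1.
Qed.

End OpenSubgroups.

(* [compact_cover] is stated for pointed spaces; [one] serves as base point. *)
Definition pointed_carrier (H : topGroup) : Type := tg_carrier H.
HB.instance Definition _ (H : topGroup) := Topological.on (pointed_carrier H).
HB.instance Definition _ (H : topGroup) := isPointed.Build (pointed_carrier H) (tg_one H).

Lemma tg_cover_compact {H : topGroup} {K : set H} : compact K -> cover_compact K.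
Proof.
by move=> cK; have : @compact (pointed_carrier H) K by []; rewrite compact_cover.
Qed.

Section Preimages.
Context {G H : topGroup} {phi : G -> H}.
Hypothesis hom_phi : group_hom phi.

Lemma finite_index_preimage {W K : set H} : is_subgroup W -> open W -> compact K ->
  finite_index (phi @^-1` W) (phi @^-1` K).
Proof.
move=> sW oW cK.
have [X _ KX] : finite_subset_cover K (fun x => lcoset x W) K.
  apply: (tg_cover_compact cK H K (fun x => lcoset x W)) => [x _|x Kx].
    exact: open_lcoset.
  by exists x => //; exists one; [case: sW|rewrite tg_mulg1].
apply: sub_finite_set (finite_image (fun x => phi @^-1` lcoset x W) (finite_fset X)).
move=> _ [u Ku <-]; have [x Xx Wu] := KX _ Ku.
by exists x => //; rewrite (preimage_lcoset hom_phi sW Wu).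
Qed.

Lemma commensurated_preimage {V : set H} : is_subgroup V -> open V -> compact V ->
  commensurated (phi @^-1` V).
Proof.
move=> sV oV cV g; rewrite -(preimage_conjset hom_phi) -preimage_setI.
have sW := subgroupI (conj_subgroup (phi g) sV) sV.
have oW := openI (open_conjset (phi g) oV) oV.
by split; apply: finite_index_preimage => //; exact: compact_conjset.
Qed.

Lemma image_preimage_range (V : set H) : phi @` (phi @^-1` V) = range phi `&` V.
Proof.
apply/seteqP; split => [_ [x Vx <-]|_ [[x _ <-] Vx]]; first by split => //; exists x.
by exists x.
Qed.

End Preimages.

Theorem mainTheorem18 (G : topGroup) :
  tdlc G ->
  (forall U : set G, is_subgroup U -> open U -> U <> [set: G] ->
     commensurated U -> compact U) ->
  forall (H : topGroup) (phi : G -> H),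
    tdlc H -> group_hom phi -> continuous phi -> closed (range phi).
Proof.
move=> _ small_commensurated H phi tdH hom_phi cphi.
have closed1 := totally_disconnected_closed1 tdH.1.
case: (pselect (exists V : set H,
    [/\ is_subgroup V, open V, compact V & ~ range phi `<=` V])); last first.
  move=> /forallNP noV; suff -> : range phi = [set one] by exact: closed1.
  apply/seteqP; split=> [_ [x _ <-]|_ ->]; last by case: (range_subgroup hom_phi).
  apply: (tdlc_compact_open_subgroups_bigcap (phi x) tdH) => V sV oV cV.
  by apply: contrapT => nVx; apply: (noV V); split => // rV; apply/nVx/rV.
move=> [V [sV oV cV nV]].
have cU : compact (phi @^-1` V).
  apply: small_commensurated.
  - exact: preimage_subgroup.
  - exact: (continuousP _).1 cphi _ oV.
  - by move=> UT; apply: nV => _ [x _ <-]; rewrite -[_ (phi x)]/((phi @^-1` V) x) UT.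
  - exact: commensurated_preimage.
have clSV : closed (range phi `&` V).
  rewrite -image_preimage_range; apply: compact_closed (tg_hausdorff (closed1 one)) _.
  exact: continuous_compact (continuous_subspaceT cphi) cU.
exact: closed_subgroup_of_closed_trace (range_subgroup hom_phi) sV oV clSV.
Qed.
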